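(* Let $(X,\mu)$ be a measure space and $p>2$. For all non-zero functions $g,h\in L^p(X,\mu)$ (real or complex valued), $$\|g+h\|_p \leq \left( 1 - \frac{\|g\|_p\|h\|_p}{(\|g\|_p + \|h\|_p)^2} \left\Vert \frac{|g|^{p/2}}{\|g\|_p^{p/2}} - \frac{|h|^{p/2}}{\|h\|_p^{p/2}} \right\Vert_2^2 \right)^{1/p} (\|g\|_p + \|h\|_p).$$
   Context: $\|f\|_q := \left(\int |f|^q\,d\mu\right)^{1/q}$. *)

From HB Require Import structures.
From mathcomp Require Import all_boot all_order all_algebra.
From mathcomp Require Import all_classical all_reals all_analysis.
From mathcomp Require Import complex.

Set Implicit Arguments.
Unset Strict Implicit.
Unset Printing Implicit Defensive.

Import Order.TTheory GRing.Theory Num.Theory.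

Local Open Scope classical_set_scope.
Local Open Scope ring_scope.

Definition cmod (R : rcfType) (z : R[i]) : R :=
  Num.sqrt (complex.Re z ^+ 2 + complex.Im z ^+ 2).

(* ||f||_q = (\int |f|^q dmu)^(1/q), as a real number (the library's
   extended-real Lnorm, taken with fine; used only for functions where it is
   finite) *)
Definition Lpnorm d (T : measurableType d) (R : realType)
    (mu : {measure set T -> \bar R}) (q : R) (f : T -> R) : R :=
  fine ('N[mu]_(q%:E)[EFin \o f]).

Definition memLp d (T : measurableType d) (R : realType)
    (mu : {measure set T -> \bar R}) (q : R) (f : T -> R) : Prop :=
  measurable_fun [set: T] f /\ ('N[mu]_(q%:E)[EFin \o f] < +oo)%E.

Definition memLpC d (T : measurableType d) (R : realType)
    (mu : {measure set T -> \bar R}) (q : R) (f : T -> R[i]) : Prop :=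
  [/\ measurable_fun [set: T] (fun x => complex.Re (f x)),
      measurable_fun [set: T] (fun x => complex.Im (f x)) &
      ('N[mu]_(q%:E)[EFin \o (fun x => cmod (f x))] < +oo)%E].

Definition rhs_bound d (T : measurableType d) (R : realType)
    (mu : {measure set T -> \bar R}) (p : R) (G H : T -> R) : R :=
  let a := Lpnorm mu p G in
  let b := Lpnorm mu p H in
  (1 - a * b / (a + b) ^+ 2 *
     (Lpnorm mu 2 (fun x => G x `^ (p / 2) / a `^ (p / 2)
                            - H x `^ (p / 2) / b `^ (p / 2))) ^+ 2)
    `^ p^-1 * (a + b).

From HB Require Import structures.
From mathcomp Require Import all_boot all_order all_algebra.
From mathcomp Require Import all_classical all_reals all_analysis.
From mathcomp Require Import complex measurable_realfun.
From mathcomp Require Import ring.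
Import Order.TTheory GRing.Theory Num.Theory.
Local Open Scope classical_set_scope.
Local Open Scope ring_scope.

(* Let G = |g|, H = |h|, a = ||g||_p, b = ||h||_p, l = a/(a+b), X = G/a and
   Y = H/b, so that |g + h| <= (a+b)(l X + (1-l) Y) pointwise.  For p >= 2,
   convexity of t |-> t^(p/2), followed by squaring, gives the pointwise bound
     (l X + (1-l) Y)^p + l(1-l) (X^(p/2) - Y^(p/2))^2 <= l X^p + (1-l) Y^p,
   whose right-hand side has integral 1.  Integrating,
     ||g + h||_p^p <= (a+b)^p (1 - l(1-l) ||X^(p/2) - Y^(p/2)||_2^2),
   and l(1-l) = ab/(a+b)^2.  Only the moduli enter, so complex functions are
   handled exactly like real ones. *)

Section real_facts.
Context {R : realType}.
Implicit Types p q l x y a r s t : R.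

Lemma powR_convex_comb q l x y : 1 <= q -> 0 <= l -> l <= 1 -> 0 <= x -> 0 <= y ->
  (l * x + (1 - l) * y) `^ q <= l * x `^ q + (1 - l) * y `^ q.
Proof.
move=> q1 l0 l1 x0 y0.
have := @convex_powR R q q1 (Itv01 l0 l1) x y.
by rewrite !inE /= !in_itv /= !andbT !convRE => /(_ x0 y0).
Qed.

Lemma powR_div x a q : 0 <= x -> 0 < a -> (x / a) `^ q = x `^ q / a `^ q.
Proof.
move=> x0 a0; apply: (@mulIf _ (a `^ q)); first by rewrite gt_eqF ?powR_gt0.
by rewrite -powRM ?divfK ?gt_eqF ?powR_gt0 ?divr_ge0 // ltW.
Qed.

Lemma sqr_powR_half y p : 0 <= y -> (y `^ (p / 2)) ^+ 2 = y `^ p.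
Proof.
move=> y0; rewrite -powR_mulrn ?powR_ge0 // -powRrM.
by rewrite mulfVK // pnatr_eq0.
Qed.

Lemma powR_convex_sqr_defect p l x y : 2 <= p -> 0 <= l -> l <= 1 ->
  0 <= x -> 0 <= y ->
  (l * x + (1 - l) * y) `^ p + l * (1 - l) * (x `^ (p / 2) - y `^ (p / 2)) ^+ 2
    <= l * x `^ p + (1 - l) * y `^ p.
Proof.
move=> p2 l0 l1 x0 y0.
have w0 : 0 <= l * x + (1 - l) * y by rewrite addr_ge0 ?mulr_ge0 ?subr_ge0.
have q1 : 1 <= p / 2 by rewrite ler_pdivlMr // mul1r.
have := powR_convex_comb _ _ _ _ q1 l0 l1 x0 y0.
rewrite -(sqr_powR_half _ p w0) -(sqr_powR_half _ p x0) -(sqr_powR_half _ p y0).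
set X := x `^ (p / 2); set Y := y `^ (p / 2); move=> cvx.
have -> : l * X ^+ 2 + (1 - l) * Y ^+ 2
    = (l * X + (1 - l) * Y) ^+ 2 + l * (1 - l) * (X - Y) ^+ 2 by ring.
by rewrite lerD2r ler_sqr // nnegrE ?powR_ge0 // (le_trans _ cvx) ?powR_ge0.
Qed.

Lemma ge0_adde_le1_fin {J K : \bar R} {c : R} : 0 < c ->
  (0 <= J)%E -> (0 <= K)%E -> (J + c%:E * K <= 1)%E ->
  exists j k, J = j%:E /\ K = k%:E.
Proof.
move=> c0; case: J => [j||] //; case: K => [k||] // _ _.
- by move=> _; exists j, k.
- by rewrite gt0_muley ?lte_fin // addey.
- by rewrite gt0_muley ?lte_fin // addye.
Qed.

Lemma ler_powRV_mul p r s t : 0 < p -> 0 <= r -> 0 <= s -> 0 <= t ->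
  r <= s `^ p * t -> r `^ p^-1 <= t `^ p^-1 * s.
Proof.
move=> p0 r0 s0 t0 rst; apply: (@le_trans _ _ ((s `^ p * t) `^ p^-1)).
  by rewrite ge0_ler_powR ?invr_ge0 ?(ltW p0) ?nnegrE ?mulr_ge0 ?powR_ge0.
by rewrite powRM ?powR_ge0 // -powRrM mulfV ?gt_eqF // powRr1 // mulrC.
Qed.

End real_facts.

Section Lpnorm_facts.
Context {d} {T : measurableType d} {R : realType} (mu : {measure set T -> \bar R}).
Implicit Types (f g : T -> R) (q : R).

Lemma measurableT_comp_powR f q :
  measurable_fun setT f -> measurable_fun setT (fun x => f x `^ q).
Proof. exact: (@measurableT_comp _ _ _ _ _ _ (@powR R ^~ q)). Qed.

Lemma Lpnorm_gt0 {f q} : 0 < q -> measurable_fun setT f ->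
  ('N[mu]_(q%:E)[EFin \o f] < +oo)%E -> ~ {ae mu, forall x, f x = 0} ->
  0 < Lpnorm mu q f.
Proof.
move=> q0 mf fin f_neq0; rewrite lt_neqAle fine_ge0 ?Lnorm_ge0 // andbT.
apply/eqP => N0; apply: f_neq0.
have Nf0 : ('N[mu]_(q%:E)[EFin \o f] = 0)%E.
  by rewrite -[LHS]fineK ?ge0_fin_numE ?Lnorm_ge0 // -[fine _]N0.
have : EFin \o f = \0 %[ae mu].
  by apply: (Lnorm_eq0_eq0 (p := q%:E)); rewrite ?lte_fin //; exact/measurable_EFinP.
by apply: filterS => x /= /(_ I) [].
Qed.

Lemma integral_powR_Lpnorm f q : 0 < q -> ('N[mu]_(q%:E)[EFin \o f] < +oo)%E ->
  (\int[mu]_x (`|f x| `^ q)%:E = (Lpnorm mu q f `^ q)%:E)%E.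
Proof.
move=> q0 fin; rewrite -poweR_EFin /Lpnorm fineK ?ge0_fin_numE ?Lnorm_ge0 //.
by rewrite poweR_Lnorm ?gt_eqF.
Qed.

Lemma Lpnorm_integral {f q r} : q != 0 ->
  (\int[mu]_x (`|f x| `^ q)%:E = r%:E)%E -> Lpnorm mu q f = r `^ q^-1.
Proof. by move=> q0 Ir; rewrite /Lpnorm unlock /= Ir poweR_EFin. Qed.

Lemma integral_powR_normalized f q : 0 < q -> measurable_fun setT f ->
  (forall x, 0 <= f x) -> ('N[mu]_(q%:E)[EFin \o f] < +oo)%E ->
  ~ {ae mu, forall x, f x = 0} ->
  (\int[mu]_x ((f x / Lpnorm mu q f) `^ q)%:E = 1)%E.
Proof.
move=> q0 mf f0 fin f_neq0; have N0 := Lpnorm_gt0 q0 mf fin f_neq0.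
have Nq0 : 0 < Lpnorm mu q f `^ q by rewrite powR_gt0.
under eq_integral do rewrite powR_div // mulrC EFinM.
rewrite ge0_integralZl_EFin ?invr_ge0 ?ltW //; last first.
- exact/measurable_EFinP/measurableT_comp_powR.
- by move=> x _; rewrite lee_fin powR_ge0.
under eq_integral do rewrite -[f _]ger0_norm //.
by rewrite integral_powR_Lpnorm // -EFinM mulVf ?gt_eqF.
Qed.

Lemma ge0_integral_lincomb (s t : R) f g : 0 <= s -> 0 <= t ->
  measurable_fun setT f -> measurable_fun setT g ->
  (forall x, 0 <= f x) -> (forall x, 0 <= g x) ->
  (\int[mu]_x (s * f x + t * g x)%:E
    = s%:E * \int[mu]_x (f x)%:E + t%:E * \int[mu]_x (g x)%:E)%E.
Proof.
move=> s0 t0 mf mg f0 g0.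
under eq_integral do rewrite EFinD !EFinM.
rewrite ge0_integralD //; last 4 first.
- by move=> x _; rewrite -EFinM lee_fin mulr_ge0.
- by apply: emeasurable_funM => //; exact/measurable_EFinP.
- by move=> x _; rewrite -EFinM lee_fin mulr_ge0.
- by apply: emeasurable_funM => //; exact/measurable_EFinP.
by rewrite !ge0_integralZl_EFin // => [x _||x _|]; rewrite ?lee_fin //;
  exact/measurable_EFinP.
Qed.

Lemma Lnorm_EFin_normr f (q : \bar R) :
  ('N[mu]_q[EFin \o (fun x => `|f x|%R)] = 'N[mu]_q[EFin \o f])%E.
Proof. by rewrite -[RHS]Lnorm_abse; apply: eq_Lnorm. Qed.

End Lpnorm_facts.

Section Lp_uniform_convexity.
Context {d} {T : measurableType d} {R : realType} (mu : {measure set T -> \bar R}).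
Variables (p : R) (G H : T -> R).
Hypotheses (p_gt2 : 2 < p)
  (mG : measurable_fun setT G) (mH : measurable_fun setT H)
  (G_ge0 : forall x, 0 <= G x) (H_ge0 : forall x, 0 <= H x)
  (G_fin : ('N[mu]_(p%:E)[EFin \o G] < +oo)%E)
  (H_fin : ('N[mu]_(p%:E)[EFin \o H] < +oo)%E)
  (G_neq0 : ~ {ae mu, forall x, G x = 0})
  (H_neq0 : ~ {ae mu, forall x, H x = 0}).

Let p_gt0 : 0 < p. Proof. exact: lt_trans p_gt2. Qed.
Let a := Lpnorm mu p G.
Let b := Lpnorm mu p H.
Let a_gt0 : 0 < a. Proof. exact: Lpnorm_gt0. Qed.
Let b_gt0 : 0 < b. Proof. exact: Lpnorm_gt0. Qed.
Let l := a / (a + b).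
Let X x := G x / a.
Let Y x := H x / b.
Let w x := l * X x + (1 - l) * Y x.
Let D x := X x `^ (p / 2) - Y x `^ (p / 2).

Let l_ge0 : 0 <= l. Proof. by rewrite divr_ge0 ?addr_ge0 ?ltW. Qed.
Let l_le1 : l <= 1. Proof. by rewrite ler_pdivrMr ?addr_gt0 // mul1r lerDl ltW. Qed.
Let l_defect_gt0 : 0 < l * (1 - l).
Proof.
rewrite mulr_gt0 //; first by rewrite divr_gt0 ?addr_gt0.
by rewrite subr_gt0 ltr_pdivrMr ?addr_gt0 // mul1r ltrDl.
Qed.

Let wE x : w x = (G x + H x) / (a + b).
Proof.
by rewrite /w /l /X /Y; field; rewrite !lt0r_neq0 ?addr_gt0.
Qed.

Let X_ge0 x : 0 <= X x. Proof. exact: divr_ge0 (G_ge0 x) (ltW a_gt0). Qed.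
Let Y_ge0 x : 0 <= Y x. Proof. exact: divr_ge0 (H_ge0 x) (ltW b_gt0). Qed.
Let w_ge0 x : 0 <= w x.
Proof.
have l'_ge0 : 0 <= 1 - l by rewrite subr_ge0.
exact: addr_ge0 (mulr_ge0 l_ge0 (X_ge0 x)) (mulr_ge0 l'_ge0 (Y_ge0 x)).
Qed.

Let mX : measurable_fun setT X. Proof. exact: measurable_funM. Qed.
Let mY : measurable_fun setT Y. Proof. exact: measurable_funM. Qed.
Let mw : measurable_fun setT w.
Proof. by apply: measurable_funD; apply: measurable_funM. Qed.
Let mD : measurable_fun setT D.
Proof. by apply: measurable_funB; apply: measurableT_comp_powR. Qed.

Lemma integral_defect_le1 :
  (\int[mu]_x (w x `^ p)%:E + (l * (1 - l))%:E * \int[mu]_x (D x ^+ 2)%:E <= 1)%E.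
Proof.
rewrite -[(\int[mu]_x (w x `^ p)%:E)%E]mul1e.
rewrite -ge0_integral_lincomb ?(ltW l_defect_gt0) //; last 4 first.
- exact: measurableT_comp_powR.
- exact: measurable_funX.
- by move=> x; rewrite powR_ge0.
- by move=> x; rewrite sqr_ge0.
have -> : 1%E = (l%:E * \int[mu]_x (X x `^ p)%:E
                 + (1 - l)%:E * \int[mu]_x (Y x `^ p)%:E)%E.
  by rewrite !integral_powR_normalized // !mule1 -EFinD subrKC.
rewrite -ge0_integral_lincomb ?subr_ge0 //; last 4 first.
- exact: measurableT_comp_powR.
- exact: measurableT_comp_powR.
- by move=> x; rewrite powR_ge0.
- by move=> x; rewrite powR_ge0.
apply: ge0_le_integral => //.
- move=> x _; rewrite lee_fin mul1r addr_ge0 ?powR_ge0 //.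
  exact: mulr_ge0 (ltW l_defect_gt0) (sqr_ge0 _).
- apply/measurable_EFinP; apply: measurable_funD; apply: measurable_funM => //.
    exact: measurableT_comp_powR.
  exact: measurable_funX.
- by apply/measurable_EFinP; apply: measurable_funD; apply: measurable_funM => //;
    apply: measurableT_comp_powR.
by move=> x _; rewrite lee_fin mul1r powR_convex_sqr_defect // ltW.
Qed.

Let integral_powR_le (F : T -> R) : measurable_fun setT F ->
  (forall x, `|F x| <= G x + H x) ->
  (\int[mu]_x (`|F x| `^ p)%:E
    <= ((a + b) `^ p)%:E * \int[mu]_x (w x `^ p)%:E)%E.
Proof.
move=> mF FGH; have S_ge0 : 0 <= a + b by rewrite addr_ge0 ?ltW.
rewrite -ge0_integralZl_EFin ?powR_ge0 //; last 2 first.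
- by move=> x _; rewrite lee_fin powR_ge0.
- exact/measurable_EFinP/measurableT_comp_powR.
apply: ge0_le_integral => //.
- by apply/measurable_EFinP/measurableT_comp_powR; exact: measurableT_comp.
- by apply/measurable_EFinP/measurable_funM => //; exact: measurableT_comp_powR.
move=> x _; rewrite -EFinM lee_fin -powRM // wE mulrC divfK ?gt_eqF ?addr_gt0 //.
by rewrite ge0_ler_powR ?nnegrE ?addr_ge0 ?(ltW p_gt0).
Qed.

Lemma Lpnorm_le_rhs_bound (F : T -> R) : measurable_fun setT F ->
  (forall x, `|F x| <= G x + H x) -> Lpnorm mu p F <= rhs_bound mu p G H.
Proof.
move=> mF FGH; set c := l * (1 - l).
have J_ge0 : (0 <= \int[mu]_x (w x `^ p)%:E)%E.
  by apply: integral_ge0 => x _; rewrite lee_fin powR_ge0.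
have K_ge0 : (0 <= \int[mu]_x (D x ^+ 2)%:E)%E.
  by apply: integral_ge0 => x _; rewrite lee_fin sqr_ge0.
have [j [k [Jj Kk]]] := ge0_adde_le1_fin l_defect_gt0 J_ge0 K_ge0 integral_defect_le1.
have j_ge0 : 0 <= j by rewrite -lee_fin -Jj.
have k_ge0 : 0 <= k by rewrite -lee_fin -Kk.
have j_le : j <= 1 - c * k.
  by rewrite lerBrDr -lee_fin EFinD EFinM -Jj -Kk integral_defect_le1.
have intF_le := integral_powR_le F mF FGH; rewrite Jj -EFinM in intF_le.
have [r intF] : exists r, (\int[mu]_x (`|F x| `^ p)%:E = r%:E)%E.
  exists (fine (\int[mu]_x (`|F x| `^ p)%:E)%E); rewrite fineK // ge0_fin_numE.
    exact: le_lt_trans intF_le (ltry _).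
  by apply: integral_ge0 => x _; rewrite lee_fin powR_ge0.
have r_ge0 : 0 <= r.
  by rewrite -lee_fin -intF; apply: integral_ge0 => x _; rewrite lee_fin powR_ge0.
rewrite /rhs_bound -/a -/b (Lpnorm_integral mu (lt0r_neq0 p_gt0) intF).
have -> : Lpnorm mu 2 (fun x => G x `^ (p / 2) / a `^ (p / 2)
                               - H x `^ (p / 2) / b `^ (p / 2)) = k `^ 2^-1.
  apply: Lpnorm_integral => //; rewrite -Kk; apply: eq_integral => x _.
  by rewrite -!powR_div // powR_mulrn // real_normK // num_real.
have -> : a * b / (a + b) ^+ 2 = c.
  by rewrite /c /l; field; rewrite lt0r_neq0 ?addr_gt0.
rewrite powR12_sqrt // sqr_sqrtr //; apply: ler_powRV_mul => //.
- by rewrite addr_ge0 ?ltW.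
- exact: le_trans j_ge0 j_le.
by rewrite -lee_fin -intF (le_trans intF_le) // lee_fin ler_wpM2l ?powR_ge0.
Qed.

End Lp_uniform_convexity.

Section cmod_facts.
Context {R : rcfType}.
Implicit Types z u : R[i].

Lemma cmodE z : cmod z = Normc.normc z. Proof. by case: z. Qed.

Lemma cmod_ge0 z : 0 <= cmod z. Proof. exact: sqrtr_ge0. Qed.

Lemma ler_cmodD z u : cmod (z + u) <= cmod z + cmod u.
Proof. by rewrite !cmodE le_normcD. Qed.

Lemma eq0_cmod z : cmod z = 0 -> z = 0.
Proof. by rewrite cmodE => /Normc.eq0_normc. Qed.

Lemma ReD z u : complex.Re (z + u) = complex.Re z + complex.Re u.
Proof. by case: z; case: u. Qed.

Lemma ImD z u : complex.Im (z + u) = complex.Im z + complex.Im u.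
Proof. by case: z; case: u. Qed.

End cmod_facts.

Lemma measurable_cmod d (T : measurableType d) (R : realType) (g : T -> R[i]) :
  measurable_fun setT (fun x => complex.Re (g x)) ->
  measurable_fun setT (fun x => complex.Im (g x)) ->
  measurable_fun setT (fun x => cmod (g x)).
Proof.
move=> mRe mIm; rewrite /cmod.
under eq_fun do rewrite -powR12_sqrt ?addr_ge0 ?sqr_ge0 //.
by apply: measurableT_comp_powR; apply: measurable_funD; apply: measurable_funX.
Qed.

Theorem theorem1p4 (d : measure_display) (T : measurableType d) (R : realType)
    (mu : {measure set T -> \bar R}) (p : R) :
  2 < p ->
  (forall g h : T -> R,
      memLp mu p g -> memLp mu p h ->
      ~ {ae mu, forall x, g x = 0} -> ~ {ae mu, forall x, h x = 0} ->
      Lpnorm mu p (fun x => g x + h x)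
        <= rhs_bound mu p (fun x => `|g x|) (fun x => `|h x|)) /\
  (forall g h : T -> R[i],
      memLpC mu p g -> memLpC mu p h ->
      ~ {ae mu, forall x, g x = 0} -> ~ {ae mu, forall x, h x = 0} ->
      Lpnorm mu p (fun x => cmod (g x + h x))
        <= rhs_bound mu p (fun x => cmod (g x)) (fun x => cmod (h x))).
Proof.
move=> p_gt2; split.
- move=> g h [mg g_fin] [mh h_fin] g_neq0 h_neq0.
  apply: Lpnorm_le_rhs_bound; rewrite ?Lnorm_EFin_normr //.
  + exact: measurableT_comp.
  + exact: measurableT_comp.
  + by apply: contra_not g_neq0; apply: filterS => x /normr0_eq0.
  + by apply: contra_not h_neq0; apply: filterS => x /normr0_eq0.
  + exact: measurable_funD.
  + by move=> x; rewrite ler_normD.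
- move=> g h [mRg mIg g_fin] [mRh mIh h_fin] g_neq0 h_neq0.
  apply: Lpnorm_le_rhs_bound => //.
  + exact: measurable_cmod.
  + exact: measurable_cmod.
  + by move=> x; apply: cmod_ge0.
  + by move=> x; apply: cmod_ge0.
  + by apply: contra_not g_neq0; apply: filterS => x /eq0_cmod.
  + by apply: contra_not h_neq0; apply: filterS => x /eq0_cmod.
  + apply: measurable_cmod.
    * by under eq_fun do rewrite ReD; exact: measurable_funD.
    * by under eq_fun do rewrite ImD; exact: measurable_funD.
  + by move=> x; rewrite ger0_norm ?cmod_ge0 ?ler_cmodD.
Qed.
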